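(* Let $\mu>0$, $u_a\in\mathbb{R}$, $\alpha_\pm\ge0$, $u_->u_+$, and Riemann data $(\alpha_0,u_0)=(\alpha_-,u_-)$ for $x<0$, $(\alpha_+,u_+)$ for $x>0$. Let $u_l(t)=u_a+(u_--u_a)e^{-\mu t}$, $u_r(t)=u_a+(u_+-u_a)e^{-\mu t}$, $\sigma(t)=u_a+\big(\frac{u_-+u_+}{2}-u_a\big)e^{-\mu t}$, $\xi(t)=u_at+\frac{u_-+u_+-2u_a}{2\mu}(1-e^{-\mu t})$, and $\omega(t)=\frac{(\alpha_++\alpha_-)(u_--u_+)}{2\mu}(1-e^{-\mu t})$. Then $\alpha=\alpha^0+\omega(t)\delta(x-\xi(t))$, $u=u^0$ with $(\alpha^0,u^0)(x,t)=(\alpha_-,u_l(t))$ for $x<\xi(t)$ and $(\alpha_+,u_r(t))$ for $x>\xi(t)$ is a $\delta$-shock solution of $\partial_t\alpha+\partial_x(\alpha u)=0$, $\partial_tu+\partial_x(\tfrac12u^2)=\mu(u_a-u)$ with these data and $\omega_0=0$, i.e. a weak solution satisfying Lax's entropy condition $u_r(t)<\sigma(t)<u_l(t)$ for all $t\ge0$.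
   Context: For $\psi\in\mathcal{C}_0^\infty(\mathbb{R}\times[0,\infty))$: $\langle\alpha,\psi\rangle=\int_0^\infty\int_{\mathbb{R}}\alpha^0\psi\,dx\,dt+\int_0^\infty\omega(t)\psi(\xi(t),t)dt$, $\langle\alpha u,\psi\rangle=\int_0^\infty\int_{\mathbb{R}}\alpha^0u^0\psi\,dx\,dt+\int_0^\infty\omega(t)\xi'(t)\psi(\xi(t),t)dt$. A weak solution with data $(\alpha_0,u_0)$ and initial weight $\omega_0$ means: for all such $\psi$, $\langle\alpha,\psi_t\rangle+\langle\alpha u,\psi_x\rangle=-\int\alpha_0\psi(x,0)dx-\omega_0\psi(\xi(0),0)$ and $\int_0^\infty\int\big(u\psi_t+\tfrac{u^2}{2}\psi_x+\mu(u_a-u)\psi\big)dx\,dt=-\int u_0\psi(x,0)dx$. *)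

From Stdlib Require Import Reals Lra ClassicalEpsilon.
Open Scope R_scope.

Definition Integrable (f : R -> R) (a b : R) : Prop :=
  inhabited (Riemann_integrable f a b).

(* Total Riemann integral: the Riemann integral when it exists, 0 otherwise
   (the value is independent of the integrability proof, RiemannInt_P5).
   Statements always assert integrability separately. *)
Definition RInt (f : R -> R) (a b : R) : R :=
  match excluded_middle_informative (Integrable f a b) with
  | left H =>
      RiemannInt (proj1_sig (constructive_indefinite_description
        (fun _ : Riemann_integrable f a b => True)
        (match H with inhabits pr => ex_intro _ pr I end)))
  | right _ => 0
  end.

Definition Int2 (F : R -> R -> R) (L T : R) : R :=
  RInt (fun t => RInt (fun x => F x t) (- L) L) 0 T.

Definition Integrable2 (F : R -> R -> R) (L T : R) : Prop :=
  (forall t, 0 <= t <= T -> Integrable (fun x => F x t) (- L) L) /\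
  Integrable (fun t => RInt (fun x => F x t) (- L) L) 0 T.

Definition cont2 (f : R -> R -> R) : Prop :=
  forall x t eps, 0 < eps -> exists d, 0 < d /\
    forall y s, Rabs (y - x) < d -> Rabs (s - t) < d ->
      Rabs (f y s - f x t) < eps.

(* C^infinity on R^2: f continuous, both first partial derivatives exist
   everywhere and are themselves C^infinity. *)
CoInductive smooth2 (f : R -> R -> R) : Prop :=
  smooth2_intro : forall fx ft : R -> R -> R,
    cont2 f ->
    (forall x t, derivable_pt_lim (fun y => f y t) x (fx x t)) ->
    (forall x t, derivable_pt_lim (fun s => f x s) t (ft x t)) ->
    smooth2 fx -> smooth2 ft -> smooth2 f.

From Pilot Require Import Defs.
From Stdlib Require Import Reals.
Open Scope R_scope.
From Stdlib Require Import Lra FunctionalExtensionality ClassicalEpsilon.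
From Coquelicot Require Coquelicot.

(* Away from the curve x = ξ(t) the pair (α⁰, u⁰) is constant in x and u solves the
   relaxation ODE u' = μ (u_a - u), so it is a classical solution there.  Splitting each
   x-integral at ξ(t), integrating ∂ₓψ exactly and differentiating the moving-endpoint
   integrals by Leibniz's rule, every weak-form integrand becomes the t-derivative of
     α₋ ∫_{-L}^{ξ} ψ + α₊ ∫_{ξ}^{L} ψ + ω ψ(ξ, t)    resp.    u_l ∫_{-L}^{ξ} ψ + u_r ∫_{ξ}^{L} ψ,
   precisely because ξ' = σ = (u_l + u_r)/2 and ω' = σ [α] - [α u] (generalized
   Rankine–Hugoniot conditions).  Integrating in t leaves only the boundary term at t = 0,
   which is the integral of the initial data.  Lax's condition holds since
   u_l - u_r = (u_- - u_+) e^{-μ t} > 0 and σ is their mean. *)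

Module DeltaShock.
Import Coquelicot.Coquelicot.

Lemma is_RInt_RInt (f : R -> R) a b : ex_RInt f a b -> is_RInt f a b (RInt f a b).
Proof. exact (@RInt_correct R_CompleteNormedModule f a b). Qed.

Lemma Integrable_of_is_RInt (f : R -> R) a b v :
  is_RInt f a b v -> Defs.Integrable f a b /\ Defs.RInt f a b = v.
Proof.
  intros H.
  assert (pr : Riemann_integrable f a b) by (apply ex_RInt_Reals_0; exists v; exact H).
  split; [constructor; exact pr|].
  unfold Defs.RInt.
  destruct (excluded_middle_informative _) as [I|N]; [|now elim N].
  rewrite <- RInt_Reals. exact (is_RInt_unique f a b v H).
Qed.

Lemma continuous_of_continuity_pt (f : R -> R) x : continuity_pt f x -> continuous f x.
Proof. apply continuity_pt_filterlim. Qed.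

Lemma continuity_pt_of_is_derive (f : R -> R) x l : is_derive f x l -> continuity_pt f x.
Proof.
  intros H. apply continuity_pt_filterlim, (@ex_derive_continuous R_AbsRing R_NormedModule).
  now exists l.
Qed.

Lemma ex_RInt_of_continuity (f : R -> R) a b : (forall t, continuity_pt f t) -> ex_RInt f a b.
Proof.
  intros Hf. apply (@ex_RInt_continuous R_CompleteNormedModule).
  intros; now apply continuous_of_continuity_pt.
Qed.

Lemma Integrable_of_continuity (f : R -> R) a b :
  (forall t, continuity_pt f t) -> Defs.Integrable f a b /\ Defs.RInt f a b = RInt f a b.
Proof.
  intros Hf. apply Integrable_of_is_RInt, is_RInt_RInt.
  now apply ex_RInt_of_continuity.
Qed.

Lemma Int2_of_is_RInt (F : R -> R -> R) (f : R -> R) L T :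
  (forall t, is_RInt (fun x => F x t) (- L) L (f t)) -> (forall t, continuity_pt f t) ->
  Integrable2 F L T /\ Int2 F L T = RInt f 0 T.
Proof.
  intros HF Hf.
  assert (E : (fun t => Defs.RInt (fun x => F x t) (- L) L) = f).
  { extensionality t. apply Integrable_of_is_RInt, HF. }
  unfold Integrable2, Int2. rewrite E.
  split; [split|]; try apply Integrable_of_continuity, Hf.
  intros t _. apply (Integrable_of_is_RInt _ _ _ _ (HF t)).
Qed.

Lemma RInt_eq_0 (f : R -> R) a b :
  (forall x, Rmin a b < x < Rmax a b -> f x = 0) -> RInt f a b = 0.
Proof.
  intros H. rewrite (RInt_ext f (fun _ => 0)) by exact H.
  rewrite RInt_const. apply (@scal_zero_r R_Ring R_ModuleSpace).
Qed.

Lemma RInt_plus_of_continuity (f g : R -> R) a b :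
  (forall t, continuity_pt f t) -> (forall t, continuity_pt g t) ->
  RInt f a b + RInt g a b = RInt (fun t => f t + g t) a b.
Proof.
  intros Hf Hg. symmetry.
  exact (RInt_plus f g a b (ex_RInt_of_continuity f a b Hf) (ex_RInt_of_continuity g a b Hg)).
Qed.

Lemma is_derive_eq (f : R -> R) x l l' : is_derive f x l -> l = l' -> is_derive f x l'.
Proof. now intros H <-. Qed.

Lemma RInt_antiderivative (F f : R -> R) a b :
  (forall t, is_derive F t (f t)) -> (forall t, continuity_pt f t) -> RInt f a b = F b - F a.
Proof.
  intros dF Hf. apply is_RInt_unique.
  apply (@is_RInt_derive R_CompleteNormedModule F f a b); intros; auto.
  now apply continuous_of_continuity_pt.
Qed.

Lemma is_RInt_combo (f g k : R -> R) a b If Ig Ik p q r :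
  is_RInt f a b If -> is_RInt g a b Ig -> is_RInt k a b Ik ->
  is_RInt (fun x => p * f x + q * g x + r * k x) a b (p * If + q * Ig + r * Ik).
Proof.
  intros Hf Hg Hk.
  exact (is_RInt_plus _ _ _ _ _ _
           (is_RInt_plus _ _ _ _ _ _ (is_RInt_scal _ _ _ p _ Hf) (is_RInt_scal _ _ _ q _ Hg))
           (is_RInt_scal _ _ _ r _ Hk)).
Qed.

Lemma is_RInt_glue (h F G : R -> R) (a b c : R) :
  a <= b -> (forall u v, ex_RInt F u v) -> (forall u v, ex_RInt G u v) ->
  (forall x, x < a \/ b < x -> F x = 0 /\ G x = 0) ->
  (forall x, x < c -> h x = F x) -> (forall x, c <= x -> h x = G x) ->
  is_RInt h a b (RInt F a c + RInt G c b).
Proof.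
  intros Hab eF eG Hout HF HG.
  assert (F0 : forall x, x < a \/ b < x -> F x = 0) by (intros; apply Hout; auto).
  assert (G0 : forall x, x < a \/ b < x -> G x = 0) by (intros; apply Hout; auto).
  destruct (Rle_dec c a) as [Hca|Hac]; [|destruct (Rle_dec b c) as [Hbc|Hcb]].
  - rewrite (RInt_eq_0 F a c)
      by (intros x Hx; apply F0; rewrite Rmin_right, Rmax_left in Hx by lra; lra).
    rewrite <- (RInt_Chasles G c a b (eG _ _) (eG _ _)).
    rewrite (RInt_eq_0 G c a)
      by (intros x Hx; apply G0; rewrite Rmin_left, Rmax_right in Hx by lra; lra).
    rewrite !Rplus_0_l. apply (is_RInt_ext G); [|now apply is_RInt_RInt].
    intros x Hx. rewrite Rmin_left, Rmax_right in Hx by lra. symmetry; apply HG; lra.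
  - rewrite (RInt_eq_0 G c b)
      by (intros x Hx; apply G0; rewrite Rmin_right, Rmax_left in Hx by lra; lra).
    rewrite <- (RInt_Chasles F a b c (eF _ _) (eF _ _)).
    rewrite (RInt_eq_0 F b c)
      by (intros x Hx; apply F0; rewrite Rmin_left, Rmax_right in Hx by lra; lra).
    rewrite !Rplus_0_r. apply (is_RInt_ext F); [|now apply is_RInt_RInt].
    intros x Hx. rewrite Rmin_left, Rmax_right in Hx by lra. symmetry; apply HF; lra.
  - apply (is_RInt_Chasles h a c b).
    + apply (is_RInt_ext F); [|now apply is_RInt_RInt].
      intros x Hx. rewrite Rmin_left, Rmax_right in Hx by lra. symmetry; apply HF; lra.
    + apply (is_RInt_ext G); [|now apply is_RInt_RInt].
      intros x Hx. rewrite Rmin_left, Rmax_right in Hx by lra. symmetry; apply HG; lra.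
Qed.

Lemma cont2_comp (f : R -> R -> R) (a b : R -> R) t :
  cont2 f -> continuity_pt a t -> continuity_pt b t ->
  continuity_pt (fun s => f (a s) (b s)) t.
Proof.
  intros Hf Ha Hb eps Heps.
  destruct (Hf (a t) (b t) eps Heps) as [d [Hd Hfd]].
  destruct (Ha d Hd) as [da [Hda Ha']]. destruct (Hb d Hd) as [db [Hdb Hb']].
  exists (Rmin da db); split; [now apply Rmin_pos|].
  intros s [Ds Hs]. simpl in *. unfold R_dist in *.
  apply Hfd; [apply Ha' | apply Hb']; split; auto.
  - apply (Rlt_le_trans _ _ _ Hs), Rmin_l.
  - apply (Rlt_le_trans _ _ _ Hs), Rmin_r.
Qed.

Lemma continuous_slice (f : R -> R -> R) x t : cont2 f -> continuous (fun y => f y t) x.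
Proof.
  intros Hf. apply continuous_of_continuity_pt, (cont2_comp f (fun y => y) (fun _ => t)); auto.
  - apply continuity_pt_id.
  - now apply continuity_pt_const.
Qed.

Lemma ex_RInt_slice (f : R -> R -> R) t a b : cont2 f -> ex_RInt (fun y => f y t) a b.
Proof.
  intros Hf. apply (@ex_RInt_continuous R_CompleteNormedModule). intros; now apply continuous_slice.
Qed.

Lemma RInt_slice_partial (f fx : R -> R -> R) t a b :
  cont2 fx -> (forall x t, derivable_pt_lim (fun y => f y t) x (fx x t)) ->
  RInt (fun y => fx y t) a b = f b t - f a t.
Proof.
  intros Hfx Df. apply is_RInt_unique.
  apply (@is_RInt_derive R_CompleteNormedModule (fun y => f y t) (fun y => fx y t)); intros x _.
  - apply is_derive_Reals, Df.
  - now apply continuous_slice.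
Qed.

Lemma smooth2_cont2 (f : R -> R -> R) : smooth2 f -> cont2 f.
Proof. now intros [fx ft Hf]. Qed.

Lemma smooth2_partial_x (f fx : R -> R -> R) :
  smooth2 f -> (forall x t, derivable_pt_lim (fun y => f y t) x (fx x t)) -> smooth2 fx.
Proof.
  intros [gx gt _ Dx _ Sx _] Df.
  replace fx with gx; [exact Sx|].
  extensionality x; extensionality t. exact (uniqueness_limite _ _ _ _ (Dx x t) (Df x t)).
Qed.

Lemma smooth2_partial_t (f ft : R -> R -> R) :
  smooth2 f -> (forall x t, derivable_pt_lim (fun s => f x s) t (ft x t)) -> smooth2 ft.
Proof.
  intros [gx gt _ _ Dt _ St] Df.
  replace ft with gt; [exact St|].
  extensionality x; extensionality t. exact (uniqueness_limite _ _ _ _ (Dt x t) (Df x t)).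
Qed.

Lemma is_derive_RInt_upper_curve (g gt : R -> R -> R) (a : R) (b : R -> R) (t db : R) :
  cont2 g -> cont2 gt -> (forall x s, derivable_pt_lim (fun s => g x s) s (gt x s)) ->
  is_derive b t db ->
  is_derive (fun s => RInt (fun x => g x s) a (b s)) t
    (RInt (fun x => gt x t) a (b t) + g (b t) t * db).
Proof.
  intros Hg Hgt Dg Db.
  assert (Dgt : forall u v, Derive (fun s => g v s) u = gt v u)
    by (intros; apply is_derive_unique, is_derive_Reals, Dg).
  assert (Cgt : forall u v, continuity_2d_pt (fun u v => Derive (fun s => g v s) u) u v).
  { intros u v. apply (continuity_2d_pt_ext (fun u v => gt v u)); [intros; now rewrite Dgt|].
    intros eps. destruct (Hgt v u eps (cond_pos eps)) as [d [Hd Hgd]].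
    exists (mkposreal d Hd). intros; now apply Hgd. }
  rewrite (RInt_ext (fun x => gt x t) (fun x => Derive (fun s => g x s) t))
    by (intros; now rewrite Dgt).
  apply (is_derive_RInt_param_bound_comp_aux3 (fun s x => g x s)); auto.
  - apply filter_forall. intros; now apply ex_RInt_slice.
  - exists (mkposreal 1 Rlt_0_1). apply filter_forall. intros; now apply ex_RInt_slice.
  - exists (mkposreal 1 Rlt_0_1). apply filter_forall. intros s x _.
    exists (gt x s). apply is_derive_Reals, Dg.
  - exists (mkposreal 1 Rlt_0_1). intros; apply Cgt.
  - apply continuity_pt_filterlim, continuous_slice, Hg.
Qed.

Lemma is_derive_along_curve (g gx gt : R -> R -> R) (b : R -> R) (t db : R) :
  smooth2 g -> (forall x s, derivable_pt_lim (fun y => g y s) x (gx x s)) ->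
  (forall x s, derivable_pt_lim (fun s => g x s) s (gt x s)) -> is_derive b t db ->
  is_derive (fun s => g (b s) s) t (gt (b t) t + gx (b t) t * db).
Proof.
  intros Sg Dgx Dgt Db.
  pose proof (smooth2_partial_x g gx Sg Dgx) as [gxx gxt Cgx _ Dgxt _ Sgxt].
  (* No two-variable chain rule is needed: g (b s) s = g (b t) s + ∫_{b t}^{b s} gx(x,s) dx. *)
  apply (is_derive_ext (fun s => g (b t) s + RInt (fun x => gx x s) (b t) (b s))).
  { intros s. rewrite (RInt_slice_partial g gx) by auto. apply Rplus_minus. }
  replace (gt (b t) t + gx (b t) t * db)
    with (gt (b t) t + (RInt (fun x => gxt x t) (b t) (b t) + gx (b t) t * db))
    by (rewrite RInt_point; unfold zero; simpl; ring).
  apply (@is_derive_plus R_AbsRing R_NormedModule).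
  - apply is_derive_Reals, Dgt.
  - apply is_derive_RInt_upper_curve; auto. now apply smooth2_cont2.
Qed.

Lemma derivable_pt_lim_locally_0 (f : R -> R) x d :
  0 < d -> (forall y, Rabs (y - x) < d -> f y = 0) -> derivable_pt_lim f x 0.
Proof.
  intros Hd Hf eps Heps. exists (mkposreal d Hd). intros h Hh0 Hh. simpl in Hh.
  rewrite (Hf (x + h)), (Hf x) by (rewrite ?Rminus_diag, ?Rabs_R0; replace (x + h - x) with h by ring; auto).
  unfold Rminus, Rdiv. rewrite Rplus_opp_r, !Rmult_0_l, Rplus_0_l, Ropp_0, Rabs_R0. exact Heps.
Qed.

Create HintDb time_continuity.

Ltac continuity_pt_auto :=
  repeat first [ apply continuity_pt_minus | apply continuity_pt_plus | apply continuity_pt_opp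
               | apply continuity_pt_mult
               | apply continuity_pt_const; intros ??; reflexivity ];
  auto with time_continuity.

Section TestFunction.

Variables (psi psix psit : R -> R -> R) (L T : R).
Hypothesis psi_smooth : smooth2 psi.
Hypothesis psi_dx : forall x t, derivable_pt_lim (fun y => psi y t) x (psix x t).
Hypothesis psi_dt : forall x t, derivable_pt_lim (fun s => psi x s) t (psit x t).
Hypothesis L_nonneg : 0 <= L.
Hypothesis psi_support : forall x t, L <= Rabs x \/ T <= t -> psi x t = 0.

Lemma psix_smooth : smooth2 psix.
Proof. exact (smooth2_partial_x psi psix psi_smooth psi_dx). Qed.

Lemma psit_smooth : smooth2 psit.
Proof. exact (smooth2_partial_t psi psit psi_smooth psi_dt). Qed.

Lemma psi_outside x t : x < - L \/ L < x -> psi x t = 0 /\ psix x t = 0 /\ psit x t = 0.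
Proof.
  intros Hx.
  assert (Hx' : L < Rabs x) by (destruct Hx; [rewrite Rabs_left | rewrite Rabs_right]; lra).
  assert (P0 : forall s, psi x s = 0) by (intros; apply psi_support; lra).
  split; [apply P0|split].
  - apply (uniqueness_limite _ _ _ _ (psi_dx x t)).
    apply (derivable_pt_lim_locally_0 _ x (Rabs x - L)); [lra|].
    intros y Hy. apply psi_support. left.
    pose proof (Rabs_triang_inv x y). rewrite Rabs_minus_sym in Hy. lra.
  - apply (uniqueness_limite _ _ _ _ (psi_dt x t)).
    rewrite (functional_extensionality _ _ P0). apply derivable_pt_lim_const.
Qed.

Lemma is_RInt_test_combo (t a b p q r : R) :
  is_RInt (fun x => p * psit x t + q * psix x t + r * psi x t) a b
    (p * RInt (fun x => psit x t) a b + q * (psi b t - psi a t) + r * RInt (fun x => psi x t) a b).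
Proof.
  rewrite <- (RInt_slice_partial psi psix t a b (smooth2_cont2 _ psix_smooth) psi_dx).
  apply is_RInt_combo; apply is_RInt_RInt, ex_RInt_slice, smooth2_cont2;
    auto using psit_smooth, psix_smooth.
Qed.

Lemma is_RInt_split_test_combo (c t pl ql rl pr qr rr v : R) (h : R -> R) :
  (forall x, x < c -> h x = pl * psit x t + ql * psix x t + rl * psi x t) ->
  (forall x, c <= x -> h x = pr * psit x t + qr * psix x t + rr * psi x t) ->
  v = pl * RInt (fun x => psit x t) (- L) c + rl * RInt (fun x => psi x t) (- L) c
      + pr * RInt (fun x => psit x t) c L + rr * RInt (fun x => psi x t) c L
      + (ql - qr) * psi c t ->
  is_RInt h (- L) L v.
Proof.
  intros Hl Hr ->.
  assert (Hout : forall p q r x, x < - L \/ L < x -> p * psit x t + q * psix x t + r * psi x t = 0).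
  { intros p q r x Hx. destruct (psi_outside x t Hx) as (-> & -> & ->). ring. }
  pose proof (is_RInt_glue h _ _ (- L) L c ltac:(lra)
    (fun u v => ex_intro _ _ (is_RInt_test_combo t u v pl ql rl))
    (fun u v => ex_intro _ _ (is_RInt_test_combo t u v pr qr rr))
    (fun x Hx => conj (Hout pl ql rl x Hx) (Hout pr qr rr x Hx)) Hl Hr) as Hglue.
  rewrite (is_RInt_unique _ _ _ _ (is_RInt_test_combo t (- L) c pl ql rl)),
    (is_RInt_unique _ _ _ _ (is_RInt_test_combo t c L pr qr rr)) in Hglue.
  assert (PL : psi L t = 0) by (apply psi_support; left; apply Rle_abs).
  assert (PmL : psi (- L) t = 0) by (apply psi_support; left; rewrite Rabs_Ropp; apply Rle_abs).
  rewrite PL, PmL in Hglue.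
  match goal with |- is_RInt _ _ _ ?v => match type of Hglue with is_RInt _ _ _ ?w =>
    replace v with w by ring end end.
  exact Hglue.
Qed.

Lemma psi_final x : psi x T = 0.
Proof. apply psi_support; right; apply Rle_refl. Qed.

Section Curve.

Variables xi sigma : R -> R.
Hypothesis xi_speed : forall t, is_derive xi t (sigma t).

Definition left_part (g : R -> R -> R) t : R := RInt (fun x => g x t) (- L) (xi t).
Definition right_part (g : R -> R -> R) t : R := RInt (fun x => g x t) (xi t) L.
Definition psi_on_curve t : R := psi (xi t) t.

Lemma is_derive_left_part (g gt : R -> R -> R) t :
  smooth2 g -> (forall x s, derivable_pt_lim (fun s => g x s) s (gt x s)) ->
  is_derive (left_part g) t (left_part gt t + g (xi t) t * sigma t).
Proof.
  intros Sg Dg. apply is_derive_RInt_upper_curve; auto using smooth2_cont2.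
  apply smooth2_cont2, (smooth2_partial_t g gt Sg Dg).
Qed.

Lemma is_derive_right_part (g gt : R -> R -> R) t :
  smooth2 g -> (forall x s, derivable_pt_lim (fun s => g x s) s (gt x s)) ->
  is_derive (right_part g) t (right_part gt t - g (xi t) t * sigma t).
Proof.
  intros Sg Dg.
  assert (Cg := smooth2_cont2 g Sg). assert (Cgt := smooth2_cont2 gt (smooth2_partial_t g gt Sg Dg)).
  apply (is_derive_ext (fun s => - RInt (fun x => g x s) L (xi s))).
  { intros s. unfold right_part. rewrite <- (opp_RInt_swap _ (xi s) L) by now apply ex_RInt_slice.
    apply Ropp_involutive. }
  unfold right_part. rewrite <- (opp_RInt_swap (fun x => gt x t) L (xi t)) by now apply ex_RInt_slice.
  replace (opp (RInt (fun x => gt x t) L (xi t)) - g (xi t) t * sigma t)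
    with (- (RInt (fun x => gt x t) L (xi t) + g (xi t) t * sigma t)) by (unfold opp; simpl; ring).
  apply (@is_derive_opp R_AbsRing R_NormedModule), is_derive_RInt_upper_curve; auto.
Qed.

Lemma continuity_left_part (g : R -> R -> R) t : smooth2 g -> continuity_pt (left_part g) t.
Proof.
  intros Sg. pose proof Sg as [gx gt _ _ Dt _ _].
  exact (continuity_pt_of_is_derive _ _ _ (is_derive_left_part g gt t Sg Dt)).
Qed.

Lemma continuity_right_part (g : R -> R -> R) t : smooth2 g -> continuity_pt (right_part g) t.
Proof.
  intros Sg. pose proof Sg as [gx gt _ _ Dt _ _].
  exact (continuity_pt_of_is_derive _ _ _ (is_derive_right_part g gt t Sg Dt)).
Qed.

Lemma is_derive_psi_on_curve t :
  is_derive psi_on_curve t (psit (xi t) t + psix (xi t) t * sigma t).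
Proof. exact (is_derive_along_curve psi psix psit xi t (sigma t) psi_smooth psi_dx psi_dt (xi_speed t)). Qed.

Lemma continuity_psi_on_curve t : continuity_pt psi_on_curve t.
Proof. exact (continuity_pt_of_is_derive _ _ _ (is_derive_psi_on_curve t)). Qed.

Lemma continuity_on_curve (g : R -> R -> R) t : smooth2 g -> continuity_pt (fun s => g (xi s) s) t.
Proof.
  intros Sg. apply cont2_comp; [now apply smooth2_cont2 | | apply continuity_pt_id].
  exact (continuity_pt_of_is_derive _ _ _ (xi_speed t)).
Qed.

Lemma left_part_final : left_part psi T = 0.
Proof. apply RInt_eq_0. intros; apply psi_final. Qed.

Lemma right_part_final : right_part psi T = 0.
Proof. apply RInt_eq_0. intros; apply psi_final. Qed.

#[local] Hint Resolve psit_smooth psix_smooth continuity_left_part continuity_right_part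
  continuity_psi_on_curve continuity_on_curve : time_continuity.

Section Relaxation.

Variables (mu ua am ap um up : R) (ul ur omega : R -> R).
Hypothesis ul_relax : forall t, is_derive ul t (mu * (ua - ul t)).
Hypothesis ur_relax : forall t, is_derive ur t (mu * (ua - ur t)).
Hypothesis sigma_mean : forall t, sigma t = (ul t + ur t) / 2.
Hypothesis omega_rankine_hugoniot :
  forall t, is_derive omega t (sigma t * (ap - am) - (ap * ur t - am * ul t)).
Hypothesis xi_0 : xi 0 = 0.
Hypothesis omega_0 : omega 0 = 0.
Hypothesis ul_0 : ul 0 = um.
Hypothesis ur_0 : ur 0 = up.

Definition alpha_reg x t := if Rlt_dec x (xi t) then am else ap.
Definition u_reg x t := if Rlt_dec x (xi t) then ul t else ur t.

Lemma continuity_ul t : continuity_pt ul t.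
Proof. exact (continuity_pt_of_is_derive _ _ _ (ul_relax t)). Qed.

Lemma continuity_ur t : continuity_pt ur t.
Proof. exact (continuity_pt_of_is_derive _ _ _ (ur_relax t)). Qed.

Lemma continuity_omega t : continuity_pt omega t.
Proof. exact (continuity_pt_of_is_derive _ _ _ (omega_rankine_hugoniot t)). Qed.

#[local] Hint Resolve continuity_ul continuity_ur continuity_omega : time_continuity.

Lemma continuity_sigma t : continuity_pt sigma t.
Proof.
  replace sigma with (fun t => (ul t + ur t) * / 2) by (extensionality s; now rewrite sigma_mean).
  continuity_pt_auto.
Qed.

#[local] Hint Resolve continuity_sigma : time_continuity.

Lemma Int2_mass_density :
  Integrable2 (fun x t => alpha_reg x t * psit x t) L T /\
  Int2 (fun x t => alpha_reg x t * psit x t) L T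
    = RInt (fun t => am * left_part psit t + ap * right_part psit t) 0 T.
Proof.
  apply Int2_of_is_RInt; [|intros; continuity_pt_auto].
  intros t. apply (is_RInt_split_test_combo (xi t) t am 0 0 ap 0 0).
  - intros x Hx. unfold alpha_reg. destruct (Rlt_dec x (xi t)); [ring | lra].
  - intros x Hx. unfold alpha_reg. destruct (Rlt_dec x (xi t)); [lra | ring].
  - unfold left_part, right_part. ring.
Qed.

Lemma Int2_mass_flux :
  Integrable2 (fun x t => alpha_reg x t * u_reg x t * psix x t) L T /\
  Int2 (fun x t => alpha_reg x t * u_reg x t * psix x t) L T
    = RInt (fun t => (am * ul t - ap * ur t) * psi_on_curve t) 0 T.
Proof.
  apply Int2_of_is_RInt; [|intros; continuity_pt_auto].
  intros t. apply (is_RInt_split_test_combo (xi t) t 0 (am * ul t) 0 0 (ap * ur t) 0).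
  - intros x Hx. unfold alpha_reg, u_reg. destruct (Rlt_dec x (xi t)); [ring | lra].
  - intros x Hx. unfold alpha_reg, u_reg. destruct (Rlt_dec x (xi t)); [lra | ring].
  - unfold psi_on_curve. ring.
Qed.

Lemma Int2_momentum :
  Integrable2 (fun x t => u_reg x t * psit x t + u_reg x t ^ 2 / 2 * psix x t
                          + mu * (ua - u_reg x t) * psi x t) L T /\
  Int2 (fun x t => u_reg x t * psit x t + u_reg x t ^ 2 / 2 * psix x t
                   + mu * (ua - u_reg x t) * psi x t) L T
    = RInt (fun t => ul t * left_part psit t + mu * (ua - ul t) * left_part psi t
                     + ur t * right_part psit t + mu * (ua - ur t) * right_part psi t
                     + (ul t - ur t) * sigma t * psi_on_curve t) 0 T.
Proof.
  apply Int2_of_is_RInt; [|intros; continuity_pt_auto].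
  intros t. apply (is_RInt_split_test_combo (xi t) t (ul t) (ul t ^ 2 / 2) (mu * (ua - ul t))
                     (ur t) (ur t ^ 2 / 2) (mu * (ua - ur t))).
  - intros x Hx. unfold u_reg. destruct (Rlt_dec x (xi t)); [reflexivity | lra].
  - intros x Hx. unfold u_reg. destruct (Rlt_dec x (xi t)); [lra | reflexivity].
  - unfold left_part, right_part, psi_on_curve. rewrite sigma_mean. field.
Qed.

Lemma is_RInt_initial_data (a b : R) :
  is_RInt (fun x => (if Rlt_dec x 0 then a else b) * psi x 0) (- L) L
    (a * left_part psi 0 + b * right_part psi 0).
Proof.
  apply (is_RInt_split_test_combo 0 0 0 0 a 0 0 b).
  - intros x Hx. destruct (Rlt_dec x 0); [ring | lra].
  - intros x Hx. destruct (Rlt_dec x 0); [lra | ring].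
  - unfold left_part, right_part. rewrite xi_0. ring.
Qed.

Lemma mass_balance :
  RInt (fun t => am * left_part psit t + ap * right_part psit t) 0 T
    + RInt (fun t => omega t * psit (xi t) t) 0 T
  + (RInt (fun t => (am * ul t - ap * ur t) * psi_on_curve t) 0 T
    + RInt (fun t => omega t * sigma t * psix (xi t) t) 0 T)
  = - (am * left_part psi 0 + ap * right_part psi 0).
Proof.
  rewrite !RInt_plus_of_continuity by (intros; continuity_pt_auto).
  rewrite (RInt_antiderivative
    (fun s => am * left_part psi s + ap * right_part psi s + omega s * psi_on_curve s)).
  - rewrite left_part_final, right_part_final, omega_0.
    unfold psi_on_curve. rewrite psi_final. ring.
  - intros t. eapply is_derive_eq.
    + apply (@is_derive_plus R_AbsRing R_NormedModule);
        [apply (@is_derive_plus R_AbsRing R_NormedModule)|].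
      * apply is_derive_scal, is_derive_left_part; auto.
      * apply is_derive_scal, is_derive_right_part; auto.
      * apply (@is_derive_mult R_AbsRing); auto using is_derive_psi_on_curve, Rmult_comm.
    + simpl. unfold psi_on_curve, plus, mult; simpl. ring.
  - intros; continuity_pt_auto.
Qed.

Lemma momentum_balance :
  RInt (fun t => ul t * left_part psit t + mu * (ua - ul t) * left_part psi t
                 + ur t * right_part psit t + mu * (ua - ur t) * right_part psi t
                 + (ul t - ur t) * sigma t * psi_on_curve t) 0 T
  = - (um * left_part psi 0 + up * right_part psi 0) :> R.
Proof.
  rewrite (RInt_antiderivative (fun s => ul s * left_part psi s + ur s * right_part psi s)).
  - rewrite left_part_final, right_part_final, ul_0, ur_0. ring.
  - intros t. eapply is_derive_eq.
    + apply (@is_derive_plus R_AbsRing R_NormedModule); apply (@is_derive_mult R_AbsRing);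
        auto using is_derive_left_part, is_derive_right_part, Rmult_comm.
    + simpl. unfold psi_on_curve, plus, mult; simpl. ring.
  - intros; continuity_pt_auto.
Qed.

Lemma delta_shock_weak_solution :
  Integrable2 (fun x t => alpha_reg x t * psit x t) L T /\
  Integrable2 (fun x t => alpha_reg x t * u_reg x t * psix x t) L T /\
  Defs.Integrable (fun t => omega t * psit (xi t) t) 0 T /\
  Defs.Integrable (fun t => omega t * sigma t * psix (xi t) t) 0 T /\
  Defs.Integrable (fun x => (if Rlt_dec x 0 then am else ap) * psi x 0) (- L) L /\
  Integrable2 (fun x t => u_reg x t * psit x t + u_reg x t ^ 2 / 2 * psix x t
                          + mu * (ua - u_reg x t) * psi x t) L T /\
  Defs.Integrable (fun x => (if Rlt_dec x 0 then um else up) * psi x 0) (- L) L /\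
  Int2 (fun x t => alpha_reg x t * psit x t) L T
    + Defs.RInt (fun t => omega t * psit (xi t) t) 0 T
  + (Int2 (fun x t => alpha_reg x t * u_reg x t * psix x t) L T
    + Defs.RInt (fun t => omega t * sigma t * psix (xi t) t) 0 T)
  = - Defs.RInt (fun x => (if Rlt_dec x 0 then am else ap) * psi x 0) (- L) L /\
  Int2 (fun x t => u_reg x t * psit x t + u_reg x t ^ 2 / 2 * psix x t
                   + mu * (ua - u_reg x t) * psi x t) L T
  = - Defs.RInt (fun x => (if Rlt_dec x 0 then um else up) * psi x 0) (- L) L.
Proof.
  destruct Int2_mass_density as [I1 ->], Int2_mass_flux as [I2 ->], Int2_momentum as [I3 ->].
  destruct (Integrable_of_continuity (fun t => omega t * psit (xi t) t) 0 T) as [J1 ->];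
    [intros; continuity_pt_auto|].
  destruct (Integrable_of_continuity (fun t => omega t * sigma t * psix (xi t) t) 0 T) as [J2 ->];
    [intros; continuity_pt_auto|].
  destruct (Integrable_of_is_RInt _ _ _ _ (is_RInt_initial_data am ap)) as [K1 ->].
  destruct (Integrable_of_is_RInt _ _ _ _ (is_RInt_initial_data um up)) as [K2 ->].
  exact (conj I1 (conj I2 (conj J1 (conj J2 (conj K1 (conj I3 (conj K2
           (conj mass_balance momentum_balance)))))))).
Qed.

End Relaxation.

End Curve.

End TestFunction.

(* u_l, u_r and σ of the paper are [relaxed] with initial values u_-, u_+ and (u_- + u_+)/2. *)
Definition relaxed (mu ua u0 t : R) : R := ua + (u0 - ua) * exp (- (mu * t)).

Definition shock_path (mu ua um up t : R) : R :=
  ua * t + (um + up - 2 * ua) / (2 * mu) * (1 - exp (- (mu * t))).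

Definition shock_weight (mu am ap um up t : R) : R :=
  (ap + am) * (um - up) / (2 * mu) * (1 - exp (- (mu * t))).

Lemma is_derive_relaxed (mu ua u0 t : R) :
  is_derive (relaxed mu ua u0) t (mu * (ua - relaxed mu ua u0 t)).
Proof. unfold relaxed. auto_derive; [auto | ring]. Qed.

Lemma relaxed_0 (mu ua u0 : R) : relaxed mu ua u0 0 = u0.
Proof. unfold relaxed. rewrite !Rmult_0_r, Ropp_0, exp_0. ring. Qed.

Lemma relaxed_mean (mu ua um up t : R) :
  relaxed mu ua ((um + up) / 2) t = (relaxed mu ua um t + relaxed mu ua up t) / 2.
Proof. unfold relaxed. field. Qed.

Lemma relaxed_lax (mu ua um up t : R) : up < um ->
  relaxed mu ua up t < relaxed mu ua ((um + up) / 2) t < relaxed mu ua um t.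
Proof. intros Hu. pose proof (exp_pos (- (mu * t))). unfold relaxed. split; nra. Qed.

Lemma is_derive_shock_path (mu ua um up t : R) : mu <> 0 ->
  is_derive (shock_path mu ua um up) t (relaxed mu ua ((um + up) / 2) t).
Proof. intros Hmu. unfold shock_path, relaxed. auto_derive; [auto | field; exact Hmu]. Qed.

Lemma shock_path_0 (mu ua um up : R) : mu <> 0 -> shock_path mu ua um up 0 = 0.
Proof. intros Hmu. unfold shock_path. rewrite !Rmult_0_r, Ropp_0, exp_0. field. exact Hmu. Qed.

Lemma is_derive_shock_weight (mu ua am ap um up t : R) : mu <> 0 ->
  is_derive (shock_weight mu am ap um up) t
    (relaxed mu ua ((um + up) / 2) t * (ap - am)
     - (ap * relaxed mu ua up t - am * relaxed mu ua um t)).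
Proof. intros Hmu. unfold shock_weight, relaxed. auto_derive; [auto | field; exact Hmu]. Qed.

Lemma shock_weight_0 (mu am ap um up : R) : shock_weight mu am ap um up 0 = 0.
Proof. unfold shock_weight. rewrite !Rmult_0_r, Ropp_0, exp_0. ring. Qed.

End DeltaShock.

Theorem mainTheorem7 (mu ua am ap um up : R) :
  0 < mu -> 0 <= am -> 0 <= ap -> up < um ->
  let ul := fun t => ua + (um - ua) * exp (- (mu * t)) in
  let ur := fun t => ua + (up - ua) * exp (- (mu * t)) in
  let sigma := fun t => ua + ((um + up) / 2 - ua) * exp (- (mu * t)) in
  let xi := fun t => ua * t + (um + up - 2 * ua) / (2 * mu) * (1 - exp (- (mu * t))) in
  let omega := fun t => (ap + am) * (um - up) / (2 * mu) * (1 - exp (- (mu * t))) in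
  let omega0 := 0 in
  let alpha0 := fun x t => if Rlt_dec x (xi t) then am else ap in
  let u0 := fun x t => if Rlt_dec x (xi t) then ul t else ur t in
  let alpha_init := fun x => if Rlt_dec x 0 then am else ap in
  let u_init := fun x => if Rlt_dec x 0 then um else up in
  (forall t, 0 <= t -> ur t < sigma t < ul t) /\
  (forall (psi psix psit : R -> R -> R) (xi' : R -> R),
     smooth2 psi ->
     (forall x t, derivable_pt_lim (fun y => psi y t) x (psix x t)) ->
     (forall x t, derivable_pt_lim (fun s => psi x s) t (psit x t)) ->
     (forall t, derivable_pt_lim xi t (xi' t)) ->
     forall L T, 0 < L -> 0 < T ->
     (forall x t, L <= Rabs x \/ T <= t -> psi x t = 0) ->
     Integrable2 (fun x t => alpha0 x t * psit x t) L T /\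
     Integrable2 (fun x t => alpha0 x t * u0 x t * psix x t) L T /\
     Integrable (fun t => omega t * psit (xi t) t) 0 T /\
     Integrable (fun t => omega t * xi' t * psix (xi t) t) 0 T /\
     Integrable (fun x => alpha_init x * psi x 0) (- L) L /\
     Integrable2 (fun x t => u0 x t * psit x t + (u0 x t) ^ 2 / 2 * psix x t
                             + mu * (ua - u0 x t) * psi x t) L T /\
     Integrable (fun x => u_init x * psi x 0) (- L) L /\
     (Int2 (fun x t => alpha0 x t * psit x t) L T
        + RInt (fun t => omega t * psit (xi t) t) 0 T
      + (Int2 (fun x t => alpha0 x t * u0 x t * psix x t) L T
        + RInt (fun t => omega t * xi' t * psix (xi t) t) 0 T)
      = - RInt (fun x => alpha_init x * psi x 0) (- L) L - omega0 * psi (xi 0) 0) /\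
     Int2 (fun x t => u0 x t * psit x t + (u0 x t) ^ 2 / 2 * psix x t
                      + mu * (ua - u0 x t) * psi x t) L T
      = - RInt (fun x => u_init x * psi x 0) (- L) L).
Proof.
  intros Hmu _ _ Hu ul ur sigma xi omega omega0 alpha0 u0 alpha_init u_init.
  assert (Hmu0 : mu <> 0) by lra.
  split; [intros t _; exact (DeltaShock.relaxed_lax mu ua um up t Hu)|].
  intros psi psix psit xi' Hpsi Hpsix Hpsit Hxi' L T HL _ Hsupp.
  pose proof (fun t => DeltaShock.is_derive_shock_path mu ua um up t Hmu0) as xi_speed.
  replace xi' with sigma by (extensionality t;
    exact (uniqueness_limite xi t _ _ (proj1 (Coquelicot.Derive.is_derive_Reals _ _ _) (xi_speed t)) (Hxi' t))).
  subst omega0. rewrite Rmult_0_l, Rminus_0_r.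
  exact (DeltaShock.delta_shock_weak_solution psi psix psit L T Hpsi Hpsix Hpsit (Rlt_le _ _ HL)
    Hsupp xi sigma xi_speed mu ua am ap um up ul ur omega
    (DeltaShock.is_derive_relaxed mu ua um) (DeltaShock.is_derive_relaxed mu ua up)
    (DeltaShock.relaxed_mean mu ua um up)
    (fun t => DeltaShock.is_derive_shock_weight mu ua am ap um up t Hmu0)
    (DeltaShock.shock_path_0 mu ua um up Hmu0) (DeltaShock.shock_weight_0 mu am ap um up)
    (DeltaShock.relaxed_0 mu ua um) (DeltaShock.relaxed_0 mu ua up)).
Qed.
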